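(* For $k\in\{1,\dots,N\}$ let $J_k$ denote the transitional index for $k$ gain tickets, i.e. $J_k:=\min\{j\in\{1,\dots,k\}: j\,h^+_{j+1,k}\ge\sum_{j'=1}^{j}h^+_{j',k}\}$ with $h^+_{k+1,k}:=\infty$. Then the sequence $(J_k)_{k=1}^{N}$ is monotonically nondecreasing.
   Context: Fix $N\in\mathbb{N}$. A function $f:[0,1]\to\mathbb{R}$ is inverse S-shaped if it is strictly increasing, continuously differentiable, and there is $x_0\in[0,1]$ such that $f'$ is strictly decreasing on $[0,x_0]$ and strictly increasing on $[x_0,1]$. Let $W^+:[0,1]\to[0,1]$ be inverse S-shaped with $W^+(0)=0$, $W^+(1)=1$. For $k\in\{1,\dots,N\}$ and $j\in\{1,\dots,k\}$ let $h^+_{j,k}:=W^+\!\left(\frac{k-j+1}{N}\right)-W^+\!\left(\frac{k-j}{N}\right)$. *)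

From Stdlib Require Import Reals Arith.
Open Scope R_scope.

Definition deriv_within01 (f : R -> R) (x d : R) : Prop :=
  forall eps, 0 < eps -> exists delta, 0 < delta /\
    forall y, 0 <= y <= 1 -> 0 < Rabs (y - x) < delta ->
      Rabs ((f y - f x) / (y - x) - d) < eps.

Definition cont_within01 (g : R -> R) (x : R) : Prop :=
  forall eps, 0 < eps -> exists delta, 0 < delta /\
    forall y, 0 <= y <= 1 -> Rabs (y - x) < delta -> Rabs (g y - g x) < eps.

Definition inverse_S_shaped (f : R -> R) : Prop :=
  (forall x y, 0 <= x -> x < y -> y <= 1 -> f x < f y) /\
  exists f' : R -> R,
    (forall x, 0 <= x <= 1 -> deriv_within01 f x (f' x)) /\
    (forall x, 0 <= x <= 1 -> cont_within01 f' x) /\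
    exists x0, 0 <= x0 <= 1 /\
      (forall x y, 0 <= x -> x < y -> y <= x0 -> f' y < f' x) /\
      (forall x y, x0 <= x -> x < y -> y <= 1 -> f' x < f' y).

Definition hplus (W : R -> R) (N j k : nat) : R :=
  W (INR (k - j + 1) / INR N) - W (INR (k - j) / INR N).

Fixpoint hsum (W : R -> R) (N k j : nat) : R :=
  match j with
  | O => 0
  | S j' => hsum W N k j' + hplus W N (S j') k
  end.

(* Transition condition j h^+_{j+1,k} >= \sum_{j'<=j} h^+_{j',k},
   with h^+_{k+1,k} = +infinity (so it holds for j = k). *)
Definition trans_cond (W : R -> R) (N k j : nat) : bool :=
  if Nat.eqb j k then true
  else if Rle_dec (hsum W N k j) (INR j * hplus W N (S j) k) then true else false.

Fixpoint least_from (p : nat -> bool) (j fuel : nat) : nat :=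
  match fuel with
  | O => j
  | S f => if p j then j else least_from p (S j) f
  end.

Definition Jidx (W : R -> R) (N k : nat) : nat :=
  least_from (trans_cond W N k) 1 k.

(** Let [w m] be the increment of [W] over the grid cell [[m/N, (m+1)/N]], so
    that [h^+_{j,k} = w (k-j)].  By the mean value theorem [w m] is [W'] at an
    interior point of the cell divided by [N]; as [W'] strictly decreases and
    then strictly increases, the increments are strictly quasi-convex:
    [w i < max (w a) (w b)] for [a < i < b].

    Suppose the transition condition fails at every [i <= j] for [k] tickets.
    Failure at [j-1] (at [1] if [j = 1]) yields some [h^+_{m,k}], [m <= j],
    exceeding a later increment, and quasi-convexity makes the new first
    increment [h^+_{1,k+1} = w k] exceed [h^+_{j,k}].  Since
    [h^+_{j',k+1} = h^+_{j'-1,k}], the sum for [k+1] tickets up to [j] is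
    [h^+_{1,k+1} + sum_{j'<j} h^+_{j',k} > j h^+_{j,k} = j h^+_{j+1,k+1}], so the
    condition fails at [j] for [k+1] tickets as well, whence [J_k <= J_{k+1}]. *)
From Stdlib Require Import Reals Lra Lia.
Open Scope R_scope.

(* Stdlib's [MVT] asks for continuity on all of [R]; precomposing with [clamp01]
   extends a function that is only controlled on [0,1]. *)
Definition clamp01 (x : R) : R := Rmax 0 (Rmin 1 x).

Lemma clamp01_id x : 0 <= x <= 1 -> clamp01 x = x.
Proof. intros Hx; unfold clamp01, Rmax, Rmin; repeat destruct Rle_dec; lra. Qed.

Lemma clamp01_in x : 0 <= clamp01 x <= 1.
Proof. unfold clamp01, Rmax, Rmin; repeat destruct Rle_dec; lra. Qed.

Lemma clamp01_dist x y : 0 <= x <= 1 -> Rabs (clamp01 y - x) <= Rabs (y - x).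
Proof.
  intros Hx; unfold clamp01, Rmax, Rmin, Rabs.
  repeat destruct Rle_dec; repeat destruct Rcase_abs; lra.
Qed.

Lemma deriv_within01_cont f x d : deriv_within01 f x d -> cont_within01 f x.
Proof.
  intros Hd eps Heps.
  destruct (Hd 1 Rlt_0_1) as [delta [Hdelta Hquot]].
  pose proof (Rabs_pos d) as Hd0.
  exists (Rmin delta (eps / (Rabs d + 1))); split.
  { apply Rmin_glb_lt; [lra | apply Rdiv_lt_0_compat; lra]. }
  intros y Hy Hyx.
  pose proof (Rmin_l delta (eps / (Rabs d + 1))).
  pose proof (Rmin_r delta (eps / (Rabs d + 1))).
  destruct (Req_dec y x) as [-> | Hne].
  { unfold Rminus; rewrite Rplus_opp_r, Rabs_R0; lra. }
  assert (Hpos : 0 < Rabs (y - x)) by (apply Rabs_pos_lt; lra).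
  assert (Hnear : Rabs (y - x) < delta) by lra.
  specialize (Hquot y Hy (conj Hpos Hnear)).
  assert (Hq : Rabs ((f y - f x) / (y - x)) <= Rabs d + 1).
  { replace ((f y - f x) / (y - x)) with ((f y - f x) / (y - x) - d + d) by ring.
    eapply Rle_trans; [apply Rabs_triang | lra]. }
  replace (f y - f x) with ((f y - f x) / (y - x) * (y - x)) by (field; lra).
  rewrite Rabs_mult.
  replace eps with ((Rabs d + 1) * (eps / (Rabs d + 1))) by (field; lra).
  apply Rle_lt_trans with ((Rabs d + 1) * Rabs (y - x)).
  - apply Rmult_le_compat_r; [apply Rabs_pos | exact Hq].
  - apply Rmult_lt_compat_l; lra.
Qed.

Lemma cont_within01_clamp f x : 0 <= x <= 1 -> cont_within01 f x ->
  continuity_pt (fun y => f (clamp01 y)) x.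
Proof.
  intros Hx Hc eps Heps.
  destruct (Hc eps Heps) as [delta [Hdelta Hclose]].
  exists delta; split; [exact Hdelta |].
  intros y [_ Hy]; simpl in *; unfold R_dist in *.
  rewrite (clamp01_id x Hx).
  apply Hclose; [apply clamp01_in |].
  eapply Rle_lt_trans; [apply clamp01_dist | ]; assumption.
Qed.

Lemma deriv_within01_clamp f x d : 0 < x < 1 -> deriv_within01 f x d ->
  derivable_pt_lim (fun y => f (clamp01 y)) x d.
Proof.
  intros Hx Hd eps Heps.
  destruct (Hd eps Heps) as [delta [Hdelta Hquot]].
  assert (Hr : 0 < Rmin delta (Rmin x (1 - x))).
  { apply Rmin_glb_lt; [lra | apply Rmin_glb_lt; lra]. }
  exists (mkposreal _ Hr); intros h Hh Hsmall; simpl in Hsmall.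
  pose proof (Rmin_l delta (Rmin x (1 - x))); pose proof (Rmin_r delta (Rmin x (1 - x))).
  pose proof (Rmin_l x (1 - x)); pose proof (Rmin_r x (1 - x)).
  assert (Habs : - h <= Rabs h /\ h <= Rabs h) by (unfold Rabs; destruct Rcase_abs; lra).
  rewrite (clamp01_id (x + h)), (clamp01_id x) by lra.
  replace h with (x + h - x) at 2 by ring.
  apply Hquot; [lra |].
  replace (x + h - x) with h by ring.
  split; [apply Rabs_pos_lt |]; lra.
Qed.

Lemma mvt_within01 f f' u v :
  (forall x, 0 <= x <= 1 -> deriv_within01 f x (f' x)) ->
  0 <= u -> u < v -> v <= 1 ->
  exists c, u < c < v /\ f v - f u = f' c * (v - u).
Proof.
  intros Hf Hu Huv Hv.
  set (g := fun y => f (clamp01 y)).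
  destruct (MVT g id u v
     (fun c Hc => exist _ (f' c) (deriv_within01_clamp f c _ ltac:(lra) (Hf c ltac:(lra))))
     (fun c _ => derivable_pt_id c) Huv) as [c [Hc Heq]].
  - intros c Hc; apply cont_within01_clamp, (deriv_within01_cont _ _ (f' c)), Hf; lra.
  - intros c _; apply derivable_continuous_pt, derivable_pt_id.
  - exists c; split; [exact Hc |].
    simpl in Heq; rewrite derive_pt_id in Heq; unfold g, id in Heq.
    rewrite (clamp01_id u), (clamp01_id v) in Heq by lra; lra.
Qed.

Section ValleyDerivative.

Variables (f f' : R -> R) (x0 : R).
Hypothesis f_deriv : forall x, 0 <= x <= 1 -> deriv_within01 f x (f' x).
Hypothesis f'_decr : forall x y, 0 <= x -> x < y -> y <= x0 -> f' y < f' x.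
Hypothesis f'_incr : forall x y, x0 <= x -> x < y -> y <= 1 -> f' x < f' y.

Lemma increment_quasiconvex h a i b :
  0 < h -> 0 <= a -> a + h <= i -> i + h <= b -> b + h <= 1 ->
  f (i + h) - f i < f (a + h) - f a \/ f (i + h) - f i < f (b + h) - f b.
Proof.
  intros Hh Ha Hai Hib Hb.
  destruct (mvt_within01 f f' a (a + h)) as [ca [Hca ->]]; try lra; auto.
  destruct (mvt_within01 f f' i (i + h)) as [ci [Hci ->]]; try lra; auto.
  destruct (mvt_within01 f f' b (b + h)) as [cb [Hcb ->]]; try lra; auto.
  replace (a + h - a) with h by ring; replace (i + h - i) with h by ring;
    replace (b + h - b) with h by ring.
  destruct (Rle_dec ci x0).
  - left; apply Rmult_lt_compat_r; [lra | apply f'_decr; lra].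
  - right; apply Rmult_lt_compat_r; [lra | apply f'_incr; lra].
Qed.

End ValleyDerivative.

Definition grid_increment (W : R -> R) (N m : nat) : R :=
  W (INR (m + 1) / INR N) - W (INR m / INR N).

Lemma grid_le N m n : (1 <= N)%nat -> (m <= n)%nat -> INR m / INR N <= INR n / INR N.
Proof.
  intros HN Hmn; assert (0 < INR N) by (apply lt_0_INR; lia).
  apply Rmult_le_compat_r; [left; apply Rinv_0_lt_compat; lra | apply le_INR; lia].
Qed.

Lemma grid_succ N m : (1 <= N)%nat -> INR (m + 1) / INR N = INR m / INR N + / INR N.
Proof.
  intros HN; assert (0 < INR N) by (apply lt_0_INR; lia).
  rewrite plus_INR; simpl; field; lra.
Qed.

Lemma grid_increment_quasiconvex W N a i b :
  (1 <= N)%nat -> inverse_S_shaped W -> (a < i < b)%nat -> (b + 1 <= N)%nat ->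
  grid_increment W N i < grid_increment W N a \/
  grid_increment W N i < grid_increment W N b.
Proof.
  intros HN [_ [W' [HW' [_ [x0 [_ [Hdecr Hincr]]]]]]] Hi Hb.
  assert (0 < INR N) by (apply lt_0_INR; lia).
  unfold grid_increment; rewrite !grid_succ by exact HN.
  apply (increment_quasiconvex W W' x0); auto.
  - apply Rinv_0_lt_compat; lra.
  - apply Rmult_le_pos; [apply pos_INR | left; apply Rinv_0_lt_compat; lra].
  - rewrite <- grid_succ by exact HN; apply grid_le; lia.
  - rewrite <- grid_succ by exact HN; apply grid_le; lia.
  - rewrite <- grid_succ by exact HN.
    replace 1 with (INR N / INR N) by (field; lra); apply grid_le; lia.
Qed.

Lemma hplus_grid_increment W N j k : hplus W N j k = grid_increment W N (k - j).
Proof. reflexivity. Qed.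

Lemma hplus_succ W N j k : hplus W N (S j) (S k) = hplus W N j k.
Proof. reflexivity. Qed.

Lemma hsum_succ W N k j : hsum W N (S k) (S j) = hplus W N 1 (S k) + hsum W N k j.
Proof.
  induction j as [| j IH]; [simpl; ring |].
  change (hsum W N (S k) (S (S j))) with (hsum W N (S k) (S j) + hplus W N (S (S j)) (S k)).
  change (hsum W N k (S j)) with (hsum W N k j + hplus W N (S j) k).
  rewrite IH, (hplus_succ W N (S j) k); ring.
Qed.

Lemma hplus_gt_of_hsum W N k j c : INR j * c < hsum W N k j ->
  exists m, (1 <= m <= j)%nat /\ c < hplus W N m k.
Proof.
  induction j as [| j IH]; intros Hsum; [simpl in Hsum; lra |].
  destruct (Rlt_dec c (hplus W N (S j) k)) as [Hc | Hc].
  - exists (S j); split; [lia | exact Hc].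
  - simpl hsum in Hsum; rewrite S_INR in Hsum.
    destruct IH as [m [Hm Hcm]]; [lra |].
    exists m; split; [lia | exact Hcm].
Qed.

Lemma trans_cond_false W N k j : trans_cond W N k j = false <->
  j <> k /\ INR j * hplus W N (S j) k < hsum W N k j.
Proof.
  unfold trans_cond.
  destruct (Nat.eqb_spec j k) as [Hjk | Hjk]; [split; [discriminate | tauto] |].
  destruct Rle_dec; split; intros H; try discriminate; try split; try lra; tauto.
Qed.

Lemma hplus_lt_first_succ_of_lt W N m j k :
  (1 <= N)%nat -> inverse_S_shaped W -> (1 <= m < j)%nat -> (j <= k)%nat -> (S k <= N)%nat ->
  hplus W N j k < hplus W N m k -> hplus W N m k < hplus W N 1 (S k).
Proof.
  intros HN HW Hm Hj Hk Hlt.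
  rewrite !hplus_grid_increment in *; replace (S k - 1)%nat with k by lia.
  destruct (grid_increment_quasiconvex W N (k - j) (k - m) k) as [H | H]; auto; lia || lra.
Qed.

Lemma hplus_lt_first_succ_of_trans_false W N k j :
  (1 <= N)%nat -> inverse_S_shaped W -> (1 <= j < k)%nat -> (S k <= N)%nat ->
  (forall i, (1 <= i <= j)%nat -> trans_cond W N k i = false) ->
  hplus W N j k < hplus W N 1 (S k).
Proof.
  intros HN HW Hj Hk Hfalse.
  destruct j as [| [| j]]; [lia | |].
  - destruct (proj1 (trans_cond_false W N k 1) (Hfalse 1%nat ltac:(lia))) as [_ Hlt].
    simpl hsum in Hlt; simpl INR in Hlt.
    apply (hplus_lt_first_succ_of_lt W N 1 2); auto; lia || lra.
  - destruct (proj1 (trans_cond_false W N k (S j)) (Hfalse (S j) ltac:(lia))) as [_ Hlt].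
    destruct (hplus_gt_of_hsum W N k (S j) _ Hlt) as [m [Hm Hgt]].
    apply Rlt_trans with (hplus W N m k); [exact Hgt |].
    apply (hplus_lt_first_succ_of_lt W N m (S (S j))); auto; lia.
Qed.

Lemma trans_cond_succ_false W N k j :
  (1 <= N)%nat -> inverse_S_shaped W -> (1 <= k)%nat -> (1 <= j)%nat -> (S k <= N)%nat ->
  (forall i, (1 <= i <= j)%nat -> trans_cond W N k i = false) ->
  trans_cond W N (S k) j = false.
Proof.
  intros HN HW Hk Hj HkN Hfalse.
  assert (Hjk : (j < k)%nat).
  { destruct (Nat.lt_ge_cases j k) as [| Hkj]; [assumption |].
    pose proof (Hfalse k ltac:(lia)) as Hkk.
    unfold trans_cond in Hkk; rewrite Nat.eqb_refl in Hkk; discriminate. }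
  assert (Hfirst := hplus_lt_first_succ_of_trans_false W N k j HN HW ltac:(lia) HkN Hfalse).
  destruct j as [| j]; [lia |].
  assert (Hrest : INR j * hplus W N (S j) k <= hsum W N k j).
  { destruct j as [| j]; [simpl; lra |].
    left; apply (trans_cond_false W N k (S j)), Hfalse; lia. }
  apply trans_cond_false; split; [lia |].
  rewrite hsum_succ, hplus_succ, S_INR; lra.
Qed.

Lemma least_from_ge p m fuel : (m <= least_from p m fuel)%nat.
Proof.
  revert m; induction fuel as [| fuel IH]; intros m; simpl; [lia |].
  destruct (p m); [lia | specialize (IH (S m)); lia].
Qed.

Lemma least_from_mono p q m fuel fuel' : (fuel <= fuel')%nat ->
  (forall j, (m <= j < m + fuel)%nat ->
     (forall i, (m <= i <= j)%nat -> p i = false) -> q j = false) ->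
  (least_from p m fuel <= least_from q m fuel')%nat.
Proof.
  revert m fuel'; induction fuel as [| fuel IH]; intros m fuel' Hfuel Hpq;
    simpl; [apply least_from_ge |].
  destruct fuel' as [| fuel']; [lia |]; simpl.
  destruct (p m) eqn:Hpm.
  { destruct (q m); [lia | pose proof (least_from_ge q (S m) fuel'); lia]. }
  rewrite (Hpq m ltac:(lia)) by (intros i Hi; replace i with m by lia; exact Hpm).
  apply IH; [lia |]; intros j Hj Hp; apply Hpq; [lia |].
  intros i Hi; destruct (Nat.eq_dec i m) as [-> | Hne]; [exact Hpm | apply Hp; lia].
Qed.

Lemma Jidx_succ W N k :
  (1 <= N)%nat -> inverse_S_shaped W -> (1 <= k)%nat -> (S k <= N)%nat ->
  (Jidx W N k <= Jidx W N (S k))%nat.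
Proof.
  intros HN HW Hk HkN; unfold Jidx.
  apply least_from_mono; [lia |].
  intros j Hj Hfalse; apply trans_cond_succ_false; auto; lia.
Qed.

Theorem lemma4 (N : nat) (W : R -> R) :
  (1 <= N)%nat ->
  inverse_S_shaped W ->
  (forall x, 0 <= x <= 1 -> 0 <= W x <= 1) ->
  W 0 = 0 -> W 1 = 1 ->
  forall k1 k2 : nat, (1 <= k1)%nat -> (k1 <= k2)%nat -> (k2 <= N)%nat ->
    (Jidx W N k1 <= Jidx W N k2)%nat.
Proof.
  intros HN HW _ _ _ k1 k2 Hk1 Hk12 Hk2.
  induction Hk12 as [| k2 Hk12 IH]; [lia |].
  apply Nat.le_trans with (Jidx W N k2); [apply IH; lia |].
  apply Jidx_succ; auto; lia.
Qed.
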